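(* Let $\mathbf P$ be a pentagon. For every constant $D\ge 1$ there is a linear reduction from $\mathsf{Lattice\text{-}Eval}(\mathbb L(\mathbf P),D)$ to $\mathsf{Pent\text{-}Eval}(\mathbf P)$.
   Context: For a set $X$, $\mathrm{Eq}(X)$ is the lattice of equivalence relations on $X$, with bottom $0_X=\{(a,a)\}$ and top $1_X=X^2$; $\theta\circ\theta'$ is relational product. A pentagon is a finite structure $\mathbf P$ with domain $P$ and three equivalence relations $\alpha^{\mathbf P},\beta^{\mathbf P},\gamma^{\mathbf P}$ on $P$ such that in $\mathrm{Eq}(P)$: $\alpha^{\mathbf P}\le\beta^{\mathbf P}$, $\beta^{\mathbf P}\wedge\gamma^{\mathbf P}=0_P$, $\beta^{\mathbf P}\circ\gamma^{\mathbf P}=1_P$, $\alpha^{\mathbf P}\vee\gamma^{\mathbf P}=1_P$. Then $P$ decomposes as $P=B_{\mathbf P}\times C_{\mathbf P}$ so that $\beta^{\mathbf P},\gamma^{\mathbf P}$ are the kernels of the projections onto $B_{\mathbf P}$ and $C_{\mathbf P}$ respectively. For $b\in B_{\mathbf P}$ let $\alpha^{\mathbf P}_b=\{(c,c')\in C_{\mathbf P}^2\mid((b,c),(b,c'))\in\alpha^{\mathbf P}\}$, and let $\mathbb L(\mathbf P)$ be the sublattice of $\mathrm{Eq}(C_{\mathbf P})$ generated by $\{\alpha^{\mathbf P}_b: b\in B_{\mathbf P}\}$. $\mathbf P_2$ is the 2-sorted structure with sorts $B_{\mathbf P}$ (first) and $C_{\mathbf P}$ (second) and one ternary relation $R=\{(b,c,c')\in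 B_{\mathbf P}\times C_{\mathbf P}\times C_{\mathbf P}\mid (c,c')\in\alpha^{\mathbf P}_b\}$; in atoms $R(x,y,y')$, $x$ is of first sort and $y,y'$ of second sort. $\mathsf{Pent\text{-}Eval}(\mathbf P)$: instances are a primitive-positive formula $\phi(X,Y)$ over $\{R\}$ (conjunction of atoms with some variables existentially quantified) with free variables $X$ of first sort and $Y$ of second sort ($X\cap Y=\emptyset$), and weights $w:X\cup Y\to[0,1]$ summing to 1; assignments map $X$ to $B_{\mathbf P}$ and $Y$ to $C_{\mathbf P}$ and are satisfying if $\phi$ is true in $\mathbf P_2$. For a finite lattice $\mathbb L$ and $D$, $\mathsf{Lattice\text{-}Eval}(\mathbb L,D)$: instances are a circuit $C$ on variables $V$ over $\{\wedge,\vee\}$ (fan-in 2) of depth $<D+D\log_2|V|$, an element $\ell\in L$, and weights $w$ on $V$ summing to 1; $f:V\to L$ is satisfying if $C(f)\ge\ell$. In both problems $\mathrm{dist}_{\mathcal I}(f)$ is the minimum weight of the set of free variables on which $f$ differs from some satisfying assignment. A linear reduction from $\mathcal P$ to $\mathcal P'$: given $(\mathcal I,f)$ with $\mathcal I$ on variable set $V$, it (possibly randomly) produces $(\mathcal I',f')$ with $|V'|=O(|V|)$ such that (i) $f$ satisfying implies $f'$ satisfying; (ii) for a constant $c_1>0$ and every $\epsilon\in(0,1)$, $\mathrm{dist}_{\mathcal I}(f)\ge\epsilon$ implies $\Pr[\mathrm{dist}_{\mathcal I'}(f')\ge c_1\epsilon]\ge9/10$; (iii) each value of $f'$ is computable with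 $O(1)$ queries to $f$. *)

From Stdlib Require Import Reals.
From mathcomp Require Import all_boot.
Set Implicit Arguments. Unset Strict Implicit. Unset Printing Implicit Defensive.

Definition is_equiv (P : finType) (e : rel P) : Prop :=
  (forall x, e x x) /\ (forall x y, e x y -> e y x) /\
  (forall x y z, e x y -> e y z -> e x z).

Definition rjoin (P : finType) (e1 e2 : rel P) : rel P :=
  connect (fun x y => e1 x y || e2 x y).

Definition is_pentagon (P : finType) (al be ga : rel P) : Prop :=
  [/\ is_equiv al, is_equiv be & is_equiv ga] /\
  [/\ (forall x y, al x y -> be x y),
      (forall x y, be x y -> ga x y -> x = y),
      (forall x z, exists y, be x y /\ ga y z)
    & (forall x y, rjoin al ga x y)].

Definition eqclasses (P : finType) (e : rel P) : {set {set P}} :=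
  (fun x => [set y | e x y]) @: [set: P].

Section PentagonDefs.
Variables (P : finType) (al be ga : rel P).

(* B_P = P / beta, C_P = P / gamma: P = B_P x C_P via the two projections *)
Definition Bt : finType := {A : {set P} | A \in eqclasses be}.
Definition Ct : finType := {A : {set P} | A \in eqclasses ga}.

Definition alpha_b (b : Bt) : rel Ct := fun c c' =>
  [exists p : P, exists p' : P,
     [&& p \in val b, p \in val c, p' \in val b, p' \in val c' & al p p']].

Definition relC := {set (Ct * Ct)}.
Definition alphaSet (b : Bt) : relC := [set q | alpha_b b q.1 q.2].
Definition meetC (x y : relC) : relC := x :&: y.
Definition joinC (x y : relC) : relC :=
  [set q | connect (fun a c => ((a, c) \in x) || ((a, c) \in y)) q.1 q.2].

Definition closedL (S : {set relC}) : bool :=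
  [forall b, alphaSet b \in S] &&
  [forall x in S, forall y in S, (meetC x y \in S) && (joinC x y \in S)].

Definition inL (x : relC) : bool := [forall S : {set relC}, closedL S ==> (x \in S)].

Definition LP : finType := {x : relC | inL x}.

Definition Rrel (b : Bt) (c c' : Ct) : bool := alpha_b b c c'.

Inductive circ (V : Type) : Type :=
| CVar : V -> circ V
| CAnd : circ V -> circ V -> circ V
| COr  : circ V -> circ V -> circ V.

Fixpoint cdepth (V : Type) (c : circ V) : nat :=
  match c with
  | CVar _ => 0
  | CAnd c1 c2 => (maxn (cdepth c1) (cdepth c2)).+1
  | COr c1 c2 => (maxn (cdepth c1) (cdepth c2)).+1
  end.

(* evaluation in Eq(C_P) (equivalently in L(P), a sublattice) *)
Fixpoint ceval (V : Type) (f : V -> LP) (c : circ V) : relC :=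
  match c with
  | CVar v => val (f v)
  | CAnd c1 c2 => meetC (ceval f c1) (ceval f c2)
  | COr c1 c2 => joinC (ceval f c1) (ceval f c2)
  end.

Record LInst := { LV : finType; Lc : circ LV; Lell : LP; Lw : LV -> R }.
Arguments Lw : clear implicits.

Definition valid_LInst (D : R) (I : LInst) : Prop :=
  [/\ (forall v, Rle R0 (Lw I v) /\ Rle (Lw I v) R1),
      \big[Rplus/R0]_(v : LV I) Lw I v = R1
    & Rlt (INR (cdepth (Lc I))) (Rplus D (Rmult D (Rdiv (ln (INR #|LV I|)) (ln (INR 2)))))].

Definition satL (I : LInst) (f : LV I -> LP) : Prop :=
  val (Lell I) \subset ceval f (Lc I).

Arguments satL : clear implicits.
Definition wdiffL (I : LInst) (f g : LV I -> LP) : R :=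
  \big[Rplus/R0]_(v : LV I | f v != g v) Lw I v.

Arguments wdiffL : clear implicits.

(* dist_I(f) >= eps  (min over satisfying assignments; min of empty = +oo) *)
Definition farL (I : LInst) (f : LV I -> LP) (eps : R) : Prop :=
  forall g, satL I g -> Rle eps (wdiffL I f g).

(* free first-sort vars PX, free second-sort vars PY, existentially
   quantified first-sort vars PEX and second-sort vars PEY; the pp-formula
   is the conjunction of the atoms R(x, y, y'). *)
Record PInst := {
  PX : finType; PY : finType; PEX : finType; PEY : finType;
  Patoms : seq ((PX + PEX) * (PY + PEY) * (PY + PEY));
  Pw : PX + PY -> R }.
Arguments Pw : clear implicits.
Arguments Patoms : clear implicits.

Definition valid_PInst (I : PInst) : Prop :=
  (forall v, Rle R0 (Pw I v) /\ Rle (Pw I v) R1) /\ \big[Rplus/R0]_(v : PX I + PY I) Pw I v = R1.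

Definition satP (I : PInst) (aX : PX I -> Bt) (aY : PY I -> Ct) : Prop :=
  exists (eX : PEX I -> Bt) (eY : PEY I -> Ct),
    let vx := fun u => match u with inl x => aX x | inr x => eX x end in
    let vy := fun u => match u with inl y => aY y | inr y => eY y end in
    all (fun t => Rrel (vx t.1.1) (vy t.1.2) (vy t.2)) (Patoms I).

Arguments satP : clear implicits.
Definition differP (I : PInst) (aX bX : PX I -> Bt) (aY bY : PY I -> Ct)
  (v : PX I + PY I) : bool :=
  match v with inl x => aX x != bX x | inr y => aY y != bY y end.

Definition wdiffP (I : PInst) (aX bX : PX I -> Bt) (aY bY : PY I -> Ct) : R :=
  \big[Rplus/R0]_(v : PX I + PY I | differP aX bX aY bY v) Pw I v.

Arguments wdiffP : clear implicits.

Definition farP (I : PInst) (aX : PX I -> Bt) (aY : PY I -> Ct) (eps : R) : Prop :=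
  forall bX bY, satP I bX bY -> Rle eps (wdiffP I aX bX aY bY).

Arguments farP : clear implicits.
Arguments farL : clear implicits.

(* A (randomized) reduction: random seed drawn uniformly from a finite
   nonempty set [seed I]; the new instance depends on I and the seed,
   the new assignment f' is computed from f. *)
Record Reduction := {
  seed : LInst -> finType;
  redI : forall I, seed I -> PInst;
  redX : forall I (s : seed I), (LV I -> LP) -> PX (redI s) -> Bt;
  redY : forall I (s : seed I), (LV I -> LP) -> PY (redI s) -> Ct }.
Arguments seed : clear implicits.
Arguments redI : clear implicits.
Arguments redX : clear implicits.
Arguments redY : clear implicits.

Definition linear_reduction (D : R) (F : Reduction) : Prop :=
  exists (cV c1 : R) (K : nat), Rlt R0 c1 /\
  forall I : LInst, valid_LInst D I ->
  [/\ (0 < #|seed F I|)%N,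
      (forall s, valid_PInst (redI F I s) /\
         Rle (INR (#|PX (redI F I s)| + #|PY (redI F I s)|)) (Rmult cV (INR #|LV I|))),
      (forall s f, satL I f -> satP (redI F I s) (redX F I s f) (redY F I s f)),
      (forall (eps : R) (f : LV I -> LP), Rlt R0 eps -> Rlt eps R1 -> farL I f eps ->
         exists G : {set seed F I},
           Rle (Rmult (Rdiv (INR 9) (INR 10)) (INR #|seed F I|)) (INR #|G|) /\
           forall s, s \in G -> farP (redI F I s) (redX F I s f) (redY F I s f) (Rmult c1 eps))
    &
      (forall s,
         (forall x, exists Q : {set LV I}, (#|Q| <= K)%N /\
            forall f g, {in Q, f =1 g} -> redX F I s f x = redX F I s g x) /\
         (forall y, exists Q : {set LV I}, (#|Q| <= K)%N /\
            forall f g, {in Q, f =1 g} -> redY F I s f y = redY F I s g y))].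

End PentagonDefs.

From Stdlib Require Import Reals Lra.
From mathcomp Require Import all_boot Rstruct.
Set Implicit Arguments. Unset Strict Implicit. Unset Printing Implicit Defensive.

(* Every element of L(P) is the value of one fixed formula on the generators
   alpha_b: the [d]-fold iterate of [(u0 /\ u1) \/ (u2 /\ u3)].  Indeed the sets
   of values of these formulas increase with [d], contain all alpha_b, and the
   values at depth [d + 1] contain the meets and joins of those at depth [d]; by
   finiteness the chain stabilizes at a sublattice, which must be L(P).
   Substituting this formula for every variable [v] of the circuit turns an
   assignment [f : V -> L(P)] into one of the leaves [(v, l)] to B_P, each leaf
   depending on [f v] only.  All elements of L(P) are preorders, so a join is a
   bounded power of relational composition, and [ell <= C(f)] becomes a
   primitive-positive formula over the leaf atoms R(x, y, y'), the elements of
   C_P being free second-sort variables set to themselves.  The leaves carry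
   half of the weight and the elements of C_P the other half: a nearby
   satisfying assignment either moves an element of C_P, or fixes them all and
   then decodes to a satisfying assignment of the circuit, and every variable on
   which the decoding differs from [f] contains a mismatched leaf. *)

Lemma sumR_ge0 (I : Type) (r : seq I) (Pr : pred I) (F : I -> R) :
  (forall i, Pr i -> Rle 0 (F i)) -> Rle 0 (\big[Rplus/R0]_(i <- r | Pr i) F i).
Proof. by move=> h; apply: (big_ind (fun x => Rle 0 x)) => //; [lra | move=> x y; lra]. Qed.

Lemma sumR_le (I : Type) (r : seq I) (Pr : pred I) (F G : I -> R) :
  (forall i, Pr i -> Rle (F i) (G i)) ->
  Rle (\big[Rplus/R0]_(i <- r | Pr i) F i) (\big[Rplus/R0]_(i <- r | Pr i) G i).
Proof. by move=> h; apply: (big_ind2 (fun x y => Rle x y)) => //; [lra | move=> *; lra]. Qed.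

Lemma sumR_ge_term (I : finType) (Pr : pred I) (F : I -> R) j :
  (forall i, Pr i -> Rle 0 (F i)) -> Pr j -> Rle (F j) (\big[Rplus/R0]_(i | Pr i) F i).
Proof.
move=> F0 Pj; rewrite (bigD1 j Pj) /=.
suff : Rle 0 (\big[Rplus/R0]_(i | Pr i && (i != j)) F i) by lra.
by apply: sumR_ge0 => i /andP [/F0].
Qed.

Lemma sumR_const (I : finType) (c : R) : \big[Rplus/R0]_(i : I) c = Rmult (INR #|I|) c.
Proof.
rewrite big_const; elim: #|I| => [|n IH] /=; first ring.
by rewrite IH; case: n {IH} => [|n] /=; ring.
Qed.

Lemma sumR_card0 (I : finType) (F : I -> R) : #|I| = 0 -> \big[Rplus/R0]_(i : I) F i = R0.
Proof. by move=> I0; rewrite big_pred0 // => i; have := card0_eq I0 i; rewrite inE. Qed.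

Section PentagonLattice.
Variables (P : finType) (al be ga : rel P).
Hypothesis pentagon : is_pentagon al be ga.

Local Notation Bt := (Bt be).
Local Notation Ct := (Ct ga).
Local Notation relC := (relC ga).
Local Notation LP := (LP al be ga).
Local Notation inL := (inL al be).

Definition preorderb (x : relC) : bool :=
  [forall a, (a, a) \in x] &&
  [forall a, forall b, forall c, ((a, b) \in x) ==> ((b, c) \in x) ==> ((a, c) \in x)].

Lemma preorderP (x : relC) :
  reflect ((forall a, (a, a) \in x) /\
           (forall a b c, (a, b) \in x -> (b, c) \in x -> (a, c) \in x)) (preorderb x).
Proof.
apply: (iffP andP) => [[/forallP refl /forallP trans]|[refl trans]]; split => //.
- by move=> a b c; move/forallP: (trans a) => /(_ b) /forallP /(_ c) /implyP H /H /implyP.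
- by apply/forallP.
- apply/forallP => a; apply/forallP => b; apply/forallP => c.
  by apply/implyP => ?; apply/implyP; apply: trans.
Qed.

Lemma eqclasses_repr (e : rel P) (A : {set P}) :
  A \in eqclasses e -> exists x, A = [set y | e x y].
Proof. by case/imsetP => x _ ->; exists x. Qed.

(* Reflexivity uses beta o gamma = 1 to meet the classes b and c; transitivity
   uses beta /\ gamma = 0 to identify the two middle witnesses. *)
Lemma alphaSet_preorder (b : Bt) : preorderb (alphaSet al ga b).
Proof.
case: pentagon => [[[alr [_ alt]] [_ [bes bet]] [_ [gas gat]]] [_ bg0 bg _]].
case: (eqclasses_repr (valP b)) => x hb.
apply/preorderP; split.
- move=> c; rewrite inE /alpha_b /=.
  case: (eqclasses_repr (valP c)) => z hc; case: (bg x z) => y [bxy gyz].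
  apply/existsP; exists y; apply/existsP; exists y.
  by rewrite hb hc !inE bxy (gas _ _ gyz) alr.
- move=> c c' c''; rewrite !inE /alpha_b /=.
  case/existsP => p /existsP [p' /and5P [pb pc p'b p'c' app']].
  case/existsP => q /existsP [q' /and5P [qb qc' q'b q'c'' aqq']].
  apply/existsP; exists p; apply/existsP; exists q'.
  rewrite pb pc q'b q'c'' /=.
  case: (eqclasses_repr (valP c')) => z hc.
  move: p'b qb p'c' qc'; rewrite hb hc !inE => h1 h2 h3 h4.
  have e : p' = q by apply: bg0; [apply: bet (bes _ _ h1) h2 | apply: gat (gas _ _ h3) h4].
  by subst; apply: alt app' aqq'.
Qed.

Lemma closedL_preorder : closedL al be [set x : relC | preorderb x].
Proof.
apply/andP; split; first by apply/forallP => b; rewrite inE alphaSet_preorder.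
apply/forallP => x; apply/implyP; rewrite inE => /preorderP [xr xt].
apply/forallP => y; apply/implyP; rewrite inE => /preorderP [yr yt].
rewrite !inE; apply/andP; split; apply/preorderP; split.
- by move=> a; rewrite inE xr yr.
- move=> a b c; rewrite !inE => /andP [h1 h2] /andP [h3 h4].
  by rewrite (xt _ _ _ h1 h3) (yt _ _ _ h2 h4).
- by move=> a; rewrite inE connect0.
- by move=> a b c; rewrite !inE /=; apply: connect_trans.
Qed.

Lemma inL_preorder (x : relC) : inL x -> preorderb x.
Proof. by move/forallP => /(_ [set x : relC | preorderb x]); rewrite closedL_preorder inE. Qed.

Lemma inL_alphaSet (b : Bt) : inL (alphaSet al ga b).
Proof. by apply/forallP => S; apply/implyP => /andP [/forallP]. Qed.

Lemma closedL_meet_join (S : {set relC}) (x y : relC) : closedL al be S ->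
  x \in S -> y \in S -> (meetC x y \in S) && (joinC x y \in S).
Proof. by case/andP => _ /forallP /(_ x) /implyP H /H /forallP /(_ y) /implyP. Qed.

Lemma inL_meetC (x y : relC) : inL x -> inL y -> inL (meetC x y).
Proof.
move=> /forallP hx /forallP hy; apply/forallP => S; apply/implyP => hS.
by case/andP: (closedL_meet_join hS (implyP (hx S) hS) (implyP (hy S) hS)).
Qed.

Lemma inL_joinC (x y : relC) : inL x -> inL y -> inL (joinC x y).
Proof.
move=> /forallP hx /forallP hy; apply/forallP => S; apply/implyP => hS.
by case/andP: (closedL_meet_join hS (implyP (hx S) hS) (implyP (hy S) hS)).
Qed.

Lemma inL_ceval (V : Type) (f : V -> LP) (t : circ V) : inL (ceval f t).
Proof.
elim: t => [v|t1 IH1 t2 IH2|t1 IH1 t2 IH2] /=; first exact: valP.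
- exact: inL_meetC.
- exact: inL_joinC.
Qed.

Lemma card_Ct_gt0_of_LP (th : LP) : (0 < #|Ct|)%N.
Proof.
case: (pickP (@predT Bt)) => [b _ | Bt0].
- case: (eqclasses_repr (valP b)) => x _; apply/card_gt0P.
  have hx : [set y | ga x y] \in eqclasses ga by apply/imsetP; exists x.
  by exists (exist (fun A : {set P} => A \in eqclasses ga) _ hx : Ct).
- have : closedL al be (set0 : {set relC}).
    apply/andP; split; first by apply/forallP => b; have := Bt0 b.
    by apply/forallP => x; rewrite inE.
  by move/(implyP (forallP (valP th) set0)); rewrite inE.
Qed.

Definition alphaLP (b : Bt) : LP := Sub (alphaSet al ga b) (inL_alphaSet b).
Definition alpha_leaves (W : Type) (x : W -> Bt) : W -> LP := fun w => alphaLP (x w).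

Lemma eq_ceval (V : Type) (f g : V -> LP) (t : circ V) : f =1 g -> ceval f t = ceval g t.
Proof. by move=> e; elim: t => [v|t1 IH1 t2 IH2|t1 IH1 t2 IH2] /=; rewrite ?e ?IH1 ?IH2. Qed.

Fixpoint cmap (V W : Type) (g : V -> W) (t : circ V) : circ W :=
  match t with
  | CVar v => CVar (g v)
  | CAnd t1 t2 => CAnd (cmap g t1) (cmap g t2)
  | COr t1 t2 => COr (cmap g t1) (cmap g t2)
  end.

Lemma ceval_cmap (V W : Type) (g : V -> W) (f : W -> LP) (t : circ V) :
  ceval f (cmap g t) = ceval (fun v => f (g v)) t.
Proof. by elim: t => [v|t1 IH1 t2 IH2|t1 IH1 t2 IH2] /=; rewrite ?IH1 ?IH2. Qed.

Fixpoint csubst (V W : Type) (h : V -> circ W) (t : circ V) : circ W :=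
  match t with
  | CVar v => h v
  | CAnd t1 t2 => CAnd (csubst h t1) (csubst h t2)
  | COr t1 t2 => COr (csubst h t1) (csubst h t2)
  end.

Lemma ceval_csubst (V W : Type) (h : V -> circ W) (f : W -> LP) (t : circ V) :
  ceval f (csubst h t) = ceval (fun v => (Sub (ceval f (h v)) (inL_ceval f (h v)) : LP)) t.
Proof. by elim: t => [v|t1 IH1 t2 IH2|t1 IH1 t2 IH2] /=; rewrite ?IH1 ?IH2. Qed.

Definition relcomp (x y : relC) : relC :=
  [set q | [exists c, ((q.1, c) \in x) && ((c, q.2) \in y)]].

Fixpoint rpow (x : relC) (k : nat) : relC :=
  if k is k'.+1 then relcomp x (rpow x k') else x.

Lemma path_rpow (x : relC) : (forall a, (a, a) \in x) ->
  forall p a, path (fun u v => (u, v) \in x) a p ->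
  forall k, (size p <= k.+1)%N -> (a, last a p) \in rpow x k.
Proof.
move=> xr; elim => [|a1 p IH] a /=.
- move=> _; elim => [|k IHk] _ //=.
  by rewrite inE; apply/existsP; exists a; rewrite xr IHk.
- case/andP => h1 h2 [|k] hs /=; first by case: p hs {IH h2}.
  by rewrite inE; apply/existsP; exists a1; rewrite h1 /= IH.
Qed.

Lemma rpow_connect (x : relC) (e : rel Ct) :
  (forall a b, (a, b) \in x -> connect e a b) ->
  forall k a b, (a, b) \in rpow x k -> connect e a b.
Proof.
move=> h; elim => [|k IH] a b /=; first exact: h.
rewrite inE => /existsP [c /andP [h1 h2]].
exact: connect_trans (h _ _ h1) (IH _ _ h2).
Qed.

(* A path witnessing the join can be shortened to at most #|Ct| steps, each of
   which is an x-step followed by a y-step once both are reflexive. *)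
Lemma joinC_rpow (x y : relC) : (forall a, (a, a) \in x) -> (forall a, (a, a) \in y) ->
  joinC x y = rpow (relcomp x y) #|Ct|.
Proof.
move=> xr yr; apply/setP => -[a b]; rewrite inE /=; apply/idP/idP.
- case/connectP => p hp ->; case: (shortenP hp) => p' hp' hu _.
  apply: path_rpow.
  + by move=> c; rewrite inE; apply/existsP; exists c; rewrite xr yr.
  + apply: sub_path hp' => u v /orP [] h; rewrite inE; apply/existsP.
    * by exists v; rewrite h yr.
    * by exists u; rewrite h xr.
  + have hc : (size (a :: p') <= #|Ct|)%N by rewrite -(card_uniqP hu) max_card.
    by apply: leq_trans (leqnSn _); apply: leq_trans hc; rewrite /= leqnSn.
- apply: rpow_connect => u v; rewrite inE => /existsP [c /andP [h1 h2]].
  by apply: (connect_trans (y := c)); apply: connect1; rewrite /= ?h1 ?h2 ?orbT.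
Qed.

Lemma joinC_id (z : relC) : preorderb z -> joinC z z = z.
Proof.
case/preorderP => zr zt; apply/setP => -[a b]; rewrite inE /=; apply/idP/idP.
- case/connectP => p hp ->; elim: p a hp => [|c p IH] a /=; first by rewrite zr.
  by case/andP => /orP [] h1 h2; exact: zt h1 (IH _ h2).
- by move=> h; apply: connect1; rewrite h.
Qed.

Definition o0 : 'I_4 := @Ordinal 4 0 isT.
Definition o1 : 'I_4 := @Ordinal 4 1 isT.
Definition o2 : 'I_4 := @Ordinal 4 2 isT.
Definition o3 : 'I_4 := @Ordinal 4 3 isT.

(* [(u0 /\ u1) \/ (u2 /\ u3)] iterated [d] times, with leaves indexed by the
   [d.-tuple 'I_4] of choices made from the root. *)
Fixpoint univ_circ (d : nat) : circ (d.-tuple 'I_4) :=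
  match d return circ (d.-tuple 'I_4) with
  | 0 => CVar [tuple]
  | d'.+1 => COr (CAnd (cmap (cons_tuple o0) (univ_circ d')) (cmap (cons_tuple o1) (univ_circ d')))
                 (CAnd (cmap (cons_tuple o2) (univ_circ d')) (cmap (cons_tuple o3) (univ_circ d')))
  end.

Definition univ_eval (d : nat) (x : d.-tuple 'I_4 -> Bt) : relC :=
  ceval (alpha_leaves x) (univ_circ d).

Definition univ_values (d : nat) : {set relC} :=
  [set univ_eval (fun t => x t) | x : {ffun d.-tuple 'I_4 -> Bt}].

Lemma univ_values_inL d z : z \in univ_values d -> inL z.
Proof. by case/imsetP => x _ ->; apply: inL_ceval. Qed.

Lemma univ_valuesS d (x1 x2 x3 x4 : {ffun d.-tuple 'I_4 -> Bt}) :
  joinC (meetC (univ_eval x1) (univ_eval x2)) (meetC (univ_eval x3) (univ_eval x4))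
    \in univ_values d.+1.
Proof.
pose x := [ffun t : d.+1.-tuple 'I_4 =>
   let i := thead t in let t' : d.-tuple 'I_4 := behead_tuple t in
   if i == o0 then x1 t' else if i == o1 then x2 t' else if i == o2 then x3 t' else x4 t'].
apply/imsetP; exists x => //; rewrite /univ_eval /= !ceval_cmap.
have branch (i : 'I_4) (y : {ffun d.-tuple 'I_4 -> Bt}) :
    (forall t, x (cons_tuple i t) = y t) ->
    ceval (fun v => alpha_leaves (fun t => x t) (cons_tuple i v)) (univ_circ d) =
    ceval (alpha_leaves y) (univ_circ d).
  by move=> hy; apply: eq_ceval => v; rewrite /alpha_leaves hy.
have xE (i : 'I_4) t : x (cons_tuple i t) =
    if i == o0 then x1 t else if i == o1 then x2 t else if i == o2 then x3 t else x4 t.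
  by rewrite ffunE theadE (_ : behead_tuple (cons_tuple i t) = t) //; apply: val_inj.
by rewrite (branch o0 x1) ?(branch o1 x2) ?(branch o2 x3) ?(branch o3 x4) // => t; rewrite xE.
Qed.

Lemma univ_values_subS d : univ_values d \subset univ_values d.+1.
Proof.
apply/subsetP => z hz; case/imsetP: (hz) => x _ ez.
have zp := inL_preorder (univ_values_inL hz).
by have := univ_valuesS x x x x; rewrite -ez /meetC setIid joinC_id.
Qed.

Lemma univ_values_meetC d z1 z2 :
  z1 \in univ_values d -> z2 \in univ_values d -> meetC z1 z2 \in univ_values d.+1.
Proof.
move=> h1 h2; case/imsetP: (h1) => x1 _ e1; case/imsetP: (h2) => x2 _ e2.
have zp := inL_preorder (inL_meetC (univ_values_inL h1) (univ_values_inL h2)).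
by have := univ_valuesS x1 x2 x1 x2; rewrite -e1 -e2 joinC_id.
Qed.

Lemma univ_values_joinC d z1 z2 :
  z1 \in univ_values d -> z2 \in univ_values d -> joinC z1 z2 \in univ_values d.+1.
Proof.
move=> h1 h2; case/imsetP: (h1) => x1 _ e1; case/imsetP: (h2) => x2 _ e2.
by have := univ_valuesS x1 x1 x2 x2; rewrite -e1 -e2 /meetC !setIid.
Qed.

Lemma univ_values_alphaSet d (b : Bt) : alphaSet al ga b \in univ_values d.
Proof.
elim: d => [|d IH]; last exact: subsetP (univ_values_subS d) _ IH.
by apply/imsetP; exists [ffun=> b]; rewrite // /univ_eval /= /alpha_leaves ffunE.
Qed.

(* An increasing chain of subsets of the finite type relC cannot grow
   #|relC|.+1 times in a row. *)
Lemma univ_values_stable : exists d, univ_values d.+1 \subset univ_values d.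
Proof.
case: (boolP [exists d : 'I_(#|relC|.+2), univ_values d.+1 \subset univ_values d]).
  by case/existsP => d h; exists d.
rewrite negb_exists => /forallP grows.
have card_ge k : (k < #|relC|.+2)%N -> (k <= #|univ_values k|)%N.
  elim: k => [|k IH] hk //.
  have : univ_values k \proper univ_values k.+1.
    by rewrite properE univ_values_subS (grows (Ordinal (ltnW hk))).
  by move/proper_card; apply: leq_trans; rewrite ltnS; apply: IH (ltnW hk).
by have := card_ge #|relC|.+1 (leqnn _); rewrite leqNgt ltnS max_card.
Qed.

Lemma univ_eval_onto : exists d, forall th : LP,
  exists x : {ffun d.-tuple 'I_4 -> Bt}, univ_eval (fun t => x t) = val th.
Proof.
case: univ_values_stable => d hd; exists d => th.
have cl : closedL al be (univ_values d).
  apply/andP; split; first by apply/forallP => b; apply: univ_values_alphaSet.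
  apply/forallP => z1; apply/implyP => h1; apply/forallP => z2; apply/implyP => h2.
  by rewrite (subsetP hd _ (univ_values_meetC h1 h2)) (subsetP hd _ (univ_values_joinC h1 h2)).
by have /imsetP [x _ ->] := implyP (forallP (valP th) _) cl; exists x.
Qed.

Section PPDefinability.
Variables (W : Type) (Y : eqType) (aX : W -> Bt) (aY : Y -> Ct).

(* Second-sort variables are the free ones [inl y] and the existentially
   quantified ones [inr k], k : nat; an assignment [nu] of the latter is total. *)
Definition ppatom := (W * (Y + nat) * (Y + nat))%type.

Definition ppval (nu : nat -> Ct) (u : Y + nat) : Ct :=
  match u with inl y => aY y | inr k => nu k end.

Definition ppatom_sat (nu : nat -> Ct) (t : ppatom) : bool :=
  Rrel al (aX t.1.1) (ppval nu t.1.2) (ppval nu t.2).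

Definition var_lt (n : nat) (u : Y + nat) : bool :=
  match u with inl _ => true | inr k => (k < n)%N end.

Definition agree_lt (n : nat) (nu nu' : nat -> Ct) := forall k, (k < n)%N -> nu k = nu' k.

Definition supported (n : nat) (s : seq ppatom) :=
  forall nu nu', agree_lt n nu nu' -> all (ppatom_sat nu) s = all (ppatom_sat nu') s.

(* A generator maps endpoints [a], [b] and the first unused quantified index
   [n] to a conjunction of atoms and the next unused index. *)
Definition ppgen := (Y + nat) -> (Y + nat) -> nat -> (seq ppatom * nat).

Definition ppdefines (G : ppgen) (rho : relC) :=
  forall a b n, var_lt n a -> var_lt n b ->
  [/\ (n <= (G a b n).2)%N,
      supported (G a b n).2 (G a b n).1,
      (forall nu, all (ppatom_sat nu) (G a b n).1 -> (ppval nu a, ppval nu b) \in rho)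
    & (forall nu, (ppval nu a, ppval nu b) \in rho ->
         exists nu', agree_lt n nu' nu /\ all (ppatom_sat nu') (G a b n).1)].

Lemma ppval_agree n nu nu' u : var_lt n u -> agree_lt n nu nu' -> ppval nu u = ppval nu' u.
Proof. by case: u => //= k hk; apply. Qed.

Lemma var_lt_le n m u : (n <= m)%N -> var_lt n u -> var_lt m u.
Proof. by case: u => //= k hnm hk; apply: leq_trans hk hnm. Qed.

Lemma agree_lt_le n m nu nu' : (n <= m)%N -> agree_lt m nu nu' -> agree_lt n nu nu'.
Proof. by move=> hnm h k hk; apply: h; apply: leq_trans hk hnm. Qed.

Lemma agree_lt_trans n nu1 nu2 nu3 :
  agree_lt n nu1 nu2 -> agree_lt n nu2 nu3 -> agree_lt n nu1 nu3.
Proof. by move=> h1 h2 k hk; rewrite h1 ?h2. Qed.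

Lemma supported_cat n m s1 s2 : (n <= m)%N -> supported n s1 -> supported m s2 ->
  supported m (s1 ++ s2).
Proof.
move=> nm h1 h2 nu nu' ag; rewrite !all_cat (h1 nu nu') ?(h2 nu nu') //.
exact: agree_lt_le ag.
Qed.

Definition ppgen_var (w : W) : ppgen := fun a b n => ([:: (w, a, b)], n).

Lemma ppdefines_var w : ppdefines (ppgen_var w) (alphaSet al ga (aX w)).
Proof.
move=> a b n ha hb; split => //=.
- by move=> nu nu' h; rewrite /ppatom_sat /= (ppval_agree ha h) (ppval_agree hb h).
- by move=> nu; rewrite andbT inE.
- by move=> nu h; exists nu; split => //; rewrite /= andbT; move: h; rewrite inE.
Qed.

Definition ppgen_meet (G1 G2 : ppgen) : ppgen := fun a b n =>
  let r1 := G1 a b n in let r2 := G2 a b r1.2 in (r1.1 ++ r2.1, r2.2).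

Lemma ppdefines_meet G1 G2 r1 r2 :
  ppdefines G1 r1 -> ppdefines G2 r2 -> ppdefines (ppgen_meet G1 G2) (meetC r1 r2).
Proof.
move=> s1 s2 a b n ha hb; rewrite /ppgen_meet /=.
case: (s1 a b n ha hb) => le1 lo1 so1 co1.
case: (s2 a b _ (var_lt_le le1 ha) (var_lt_le le1 hb)) => le2 lo2 so2 co2.
split; first exact: leq_trans le1 le2.
- exact: supported_cat lo1 lo2.
- by move=> nu; rewrite all_cat => /andP [h1 h2]; rewrite inE so1 // so2.
- move=> nu; rewrite inE => /andP [h1 h2].
  case: (co1 nu h1) => nu1 [ag1 sat1].
  have h2' : (ppval nu1 a, ppval nu1 b) \in r2.
    by rewrite (ppval_agree ha ag1) (ppval_agree hb ag1).
  case: (co2 nu1 h2') => nu2 [ag2 sat2].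
  exists nu2; split; first exact: agree_lt_trans (agree_lt_le le1 ag2) ag1.
  by rewrite all_cat sat2 andbT (lo1 nu2 nu1).
Qed.

Definition ppgen_comp (G1 G2 : ppgen) : ppgen := fun a b n =>
  let r1 := G1 a (inr n) n.+1 in let r2 := G2 (inr n) b r1.2 in (r1.1 ++ r2.1, r2.2).

Lemma ppdefines_comp G1 G2 r1 r2 :
  ppdefines G1 r1 -> ppdefines G2 r2 -> ppdefines (ppgen_comp G1 G2) (relcomp r1 r2).
Proof.
move=> s1 s2 a b n ha hb; rewrite /ppgen_comp /=.
have hn1 := leqnSn n; have hz : var_lt n.+1 (inr n) by rewrite /= ltnSn.
case: (s1 a (inr n) n.+1 (var_lt_le hn1 ha) hz) => le1 lo1 so1 co1.
case: (s2 _ b _ (var_lt_le le1 hz) (var_lt_le (leq_trans hn1 le1) hb)) => le2 lo2 so2 co2.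
split; first exact: leq_trans hn1 (leq_trans le1 le2).
- exact: supported_cat lo1 lo2.
- move=> nu; rewrite all_cat => /andP [h1 h2]; rewrite inE; apply/existsP.
  by exists (nu n); rewrite (so1 _ h1) (so2 _ h2).
- move=> nu; rewrite inE => /existsP [c /andP [h1 h2]].
  pose nu0 k := if k == n then c else nu k.
  have ag0 : agree_lt n nu0 nu by move=> k hk; rewrite /nu0 (ltn_eqF hk).
  have h1' : (ppval nu0 a, ppval nu0 (inr n)) \in r1.
    by rewrite (ppval_agree ha ag0) /= /nu0 eqxx.
  case: (co1 nu0 h1') => nu1 [ag1 sat1].
  have h2' : (ppval nu1 (inr n), ppval nu1 b) \in r2.
    rewrite (ppval_agree hz ag1) (ppval_agree (var_lt_le hn1 hb) ag1) /= /nu0 eqxx.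
    by rewrite (ppval_agree hb ag0).
  case: (co2 nu1 h2') => nu2 [ag2 sat2].
  exists nu2; split.
  + apply: agree_lt_trans (agree_lt_le (leq_trans hn1 le1) ag2) _.
    exact: agree_lt_trans (agree_lt_le hn1 ag1) ag0.
  + by rewrite all_cat sat2 andbT (lo1 nu2 nu1).
Qed.

Fixpoint ppgen_pow (G : ppgen) (k : nat) : ppgen :=
  if k is k'.+1 then ppgen_comp G (ppgen_pow G k') else G.

Lemma ppdefines_pow G r k : ppdefines G r -> ppdefines (ppgen_pow G k) (rpow r k).
Proof. by move=> s; elim: k => [|k IH] //=; apply: ppdefines_comp. Qed.

Fixpoint ppgen_circ (t : circ W) : ppgen :=
  match t with
  | CVar w => ppgen_var w
  | CAnd t1 t2 => ppgen_meet (ppgen_circ t1) (ppgen_circ t2)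
  | COr t1 t2 => ppgen_pow (ppgen_comp (ppgen_circ t1) (ppgen_circ t2)) #|Ct|
  end.

Lemma ppdefines_circ t : ppdefines (ppgen_circ t) (ceval (alpha_leaves aX) t).
Proof.
elim: t => [w|t1 IH1 t2 IH2|t1 IH1 t2 IH2] /=.
- exact: ppdefines_var.
- exact: ppdefines_meet.
- case/preorderP: (inL_preorder (inL_ceval (alpha_leaves aX) t1)) => r1 _.
  case/preorderP: (inL_preorder (inL_ceval (alpha_leaves aX) t2)) => r2 _.
  by rewrite joinC_rpow //; apply/ppdefines_pow/ppdefines_comp.
Qed.

Fixpoint ppgen_all (G : ppgen) (ps : seq (Y * Y)) (n : nat) : seq ppatom * nat :=
  match ps with
  | [::] => ([::], n)
  | p :: ps' => let r1 := G (inl p.1) (inl p.2) n in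
                let r2 := ppgen_all G ps' r1.2 in (r1.1 ++ r2.1, r2.2)
  end.

Lemma ppdefines_all G rho : ppdefines G rho -> forall ps n,
  [/\ (n <= (ppgen_all G ps n).2)%N,
      supported (ppgen_all G ps n).2 (ppgen_all G ps n).1,
      (forall nu, all (ppatom_sat nu) (ppgen_all G ps n).1 ->
         forall p, p \in ps -> (aY p.1, aY p.2) \in rho)
    & ((forall p, p \in ps -> (aY p.1, aY p.2) \in rho) ->
         forall nu, exists nu', agree_lt n nu' nu /\ all (ppatom_sat nu') (ppgen_all G ps n).1)].
Proof.
move=> sG; elim => [|p ps IH] n /=; first by split => // _ nu; exists nu.
case: (sG (inl p.1) (inl p.2) n isT isT) => le1 lo1 so1 co1.
case: (IH (G (inl p.1) (inl p.2) n).2) => le2 lo2 so2 co2.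
split; first exact: leq_trans le1 le2.
- exact: supported_cat lo1 lo2.
- move=> nu; rewrite all_cat => /andP [h1 h2] q; rewrite inE => /orP [/eqP ->|hq].
  + exact: (so1 _ h1).
  + exact: (so2 _ h2).
- move=> H nu.
  case: (co1 nu (H _ (mem_head _ _))) => nu1 [ag1 sat1].
  have H' q : q \in ps -> (aY q.1, aY q.2) \in rho by move=> hq; apply: H; rewrite inE hq orbT.
  case: (co2 H' nu1) => nu2 [ag2 sat2].
  exists nu2; split; first exact: agree_lt_trans (agree_lt_le le1 ag2) ag1.
  by rewrite all_cat sat2 andbT (lo1 nu2 nu1).
Qed.

End PPDefinability.

End PentagonLattice.

Lemma Rdiv_in01 x y : Rle 0 x -> Rle x 1 -> Rle 1 y -> Rle 0 (Rdiv x y) /\ Rle (Rdiv x y) 1.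
Proof.
move=> x0 x1 y1; have e : Rmult (Rdiv x y) y = x by field; lra.
by set z := Rdiv x y in e *; split; nra.
Qed.

Section Reduction.
Variables (P : finType) (al be ga : rel P).
Hypothesis pentagon : is_pentagon al be ga.
Variable d : nat.

Local Notation Bt := (Bt be).
Local Notation Ct := (Ct ga).
Local Notation LP := (LP al be ga).
Local Notation Tup := (d.-tuple 'I_4).

Variable code : LP -> {ffun Tup -> Bt}.
Hypothesis univ_eval_code : forall th, univ_eval al ga (fun t => code th t) = val th.

Definition leafvar (I : LInst al be ga) : finType := (LV I * Tup)%type.

Definition expanded_circ (I : LInst al be ga) : circ (leafvar I) :=
  csubst (fun v => cmap (fun l => (v, l)) (univ_circ d)) (Lc I).

(* The formula [ell <= C], with the elements of C_P as free second-sort variables. *)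
Definition ppformula (I : LInst al be ga) :=
  ppgen_all (ppgen_circ ga (expanded_circ I)) (enum (val (Lell I))) 0.

Definition nquant I := (ppformula I).2.

(* [inord] truncates, but is only applied to indices below [nquant I]. *)
Definition quantvar I (u : Ct + nat) : Ct + 'I_(nquant I).+1 :=
  match u with inl c => inl c | inr k => inr (inord k) end.

Definition pent_atoms I :
    seq ((leafvar I + void) * (Ct + 'I_(nquant I).+1) * (Ct + 'I_(nquant I).+1)) :=
  map (fun t : ppatom (leafvar I) Ct => (inl t.1.1, quantvar I t.1.2, quantvar I t.2))
    (ppformula I).1.

Definition ntup := #|{: Tup}|.

Definition pent_weight I (v : leafvar I + Ct) : R :=
  match v with
  | inl w => Rdiv (Lw w.1) (2 * INR ntup)
  | inr _ => Rinv (2 * INR #|Ct|)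
  end.

Definition pent_inst I : PInst := Build_PInst (pent_atoms I) (@pent_weight I).

Lemma pent_instP I (bX : leafvar I -> Bt) (bY : Ct -> Ct) :
  satP al (I:=pent_inst I) bX bY <-> exists nu, all (ppatom_sat al bX bY nu) (ppformula I).1.
Proof.
have atomsE (eY : 'I_(nquant I).+1 -> Ct) :
  all (fun t : (leafvar I + void) * (Ct + 'I_(nquant I).+1) * (Ct + 'I_(nquant I).+1) =>
     Rrel al (match t.1.1 with inl x => bX x | inr x => match x with end end)
       (match t.1.2 with inl y => bY y | inr y => eY y end)
       (match t.2 with inl y => bY y | inr y => eY y end)) (pent_atoms I)
  = all (ppatom_sat al bX bY (fun k => eY (inord k))) (ppformula I).1.
  by rewrite /pent_atoms all_map; apply: eq_all => -[[w [a|a]] [b|b]].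
split.
- case=> eX [eY h]; exists (fun k => eY (inord k)); rewrite -atomsE.
  by move: h; apply: eq_ind; apply: eq_all => -[[[w|[]] a] b].
- case=> nu h; exists (fun x : void => match x with end), (fun i : 'I_(nquant I).+1 => nu i).
  rewrite /= atomsE.
  case: (ppdefines_all (ppdefines_circ pentagon bX bY (expanded_circ I))
                       (enum (val (Lell I))) 0) => _ supp _ _.
  rewrite -(supp nu) // => k hk; rewrite inordK //; exact: leq_trans hk (leqnSn _).
Qed.

Definition decode I (bX : leafvar I -> Bt) (v : LV I) : LP :=
  Sub (ceval (alpha_leaves al ga bX) (cmap (fun l => (v, l)) (univ_circ d))) (inL_ceval _ _).

Lemma ceval_expanded I (bX : leafvar I -> Bt) :
  ceval (alpha_leaves al ga bX) (expanded_circ I) = ceval (decode bX) (Lc I).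
Proof. by rewrite /expanded_circ ceval_csubst. Qed.

Lemma decode_code I (f : LV I -> LP) : decode (fun w => code (f w.1) w.2) =1 f.
Proof.
by move=> v; apply: val_inj; rewrite /= ceval_cmap -univ_eval_code; apply: eq_ceval.
Qed.

Lemma pent_inst_complete I (f : LV I -> LP) : satL f ->
  satP al (I:=pent_inst I) (fun w => code (f w.1) w.2) (fun c => c).
Proof.
move=> hf; apply/pent_instP.
case: (ppdefines_all (ppdefines_circ pentagon (fun w : leafvar I => code (f w.1) w.2)
          (fun c => c) (expanded_circ I)) (enum (val (Lell I))) 0) => _ _ _ co.
case/card_gt0P: (card_Ct_gt0_of_LP (Lell I)) => c0 _.
have [|nu [_ h]] := co _ (fun _ => c0); last by exists nu.
move=> [c c'] hp /=; rewrite ceval_expanded (eq_ceval _ (decode_code f)).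
by have := subsetP hf (c, c'); rewrite -mem_enum; apply.
Qed.

Lemma decode_sat I (bX : leafvar I -> Bt) (bY : Ct -> Ct) : bY =1 id ->
  satP al (I:=pent_inst I) bX bY -> satL (decode bX).
Proof.
move=> bYE /pent_instP [nu hs].
case: (ppdefines_all (ppdefines_circ pentagon bX bY (expanded_circ I))
                     (enum (val (Lell I))) 0) => _ _ so _.
apply/subsetP => -[c c'] hp; rewrite -ceval_expanded.
by have := so nu hs (c, c'); rewrite mem_enum /= !bYE; apply.
Qed.

Lemma decode_neq_leaf I (f : LV I -> LP) (bX : leafvar I -> Bt) v :
  f v != decode bX v -> exists l, code (f v) l != bX (v, l).
Proof.
move=> hv; case: (boolP [exists l, code (f v) l != bX (v, l)]) => [/existsP //|].
rewrite negb_exists => /forallP same; case/negP: hv; apply/eqP/val_inj.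
rewrite /= ceval_cmap -univ_eval_code; apply: eq_ceval => l.
by rewrite /alpha_leaves (eqP (negbNE (same l))).
Qed.

Lemma ntup_gt0 : Rlt 0 (INR ntup).
Proof. by apply/lt_0_INR/ltP/card_gt0P; exists [tuple of nseq d o0]. Qed.

Lemma INR_card_Ct_gt0 (I : LInst al be ga) : Rlt 0 (INR #|Ct|).
Proof. exact/lt_0_INR/ltP/(card_Ct_gt0_of_LP (Lell I)). Qed.

Lemma pent_weight_ge0 I (v : leafvar I + Ct) : (forall v : LV I, Rle 0 (Lw v)) -> Rle 0 (pent_weight v).
Proof.
have := ntup_gt0; have := INR_card_Ct_gt0 I.
case: v => [w|c] /= hC hN w0; last by apply/Rlt_le/Rinv_0_lt_compat; lra.
by apply: Rmult_le_pos => //; apply/Rlt_le/Rinv_0_lt_compat; lra.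
Qed.

(* Each variable where [f] differs from the decoded assignment contains a
   mismatched leaf, of weight [Lw v / (2 ntup)]. *)
Lemma wdiffL_decode_le I (f : LV I -> LP) (bX : leafvar I -> Bt) (bY : Ct -> Ct) :
  (forall v : LV I, Rle 0 (Lw v)) ->
  Rle (Rmult (wdiffL f (decode bX)) (Rinv (2 * INR ntup)))
      (wdiffP (I:=pent_inst I) (fun w => code (f w.1) w.2) bX (fun c => c) bY).
Proof.
move=> w0; rewrite /wdiffP big_sumType -[X in Rle X _]Rplus_0_r.
apply: Rplus_le_compat; last by apply: sumR_ge0 => c _; exact: (pent_weight_ge0 (inr c) w0).
pose leaf v l := if code (f v) l != bX (v, l) then pent_weight (inl (v, l)) else R0.
rewrite big_mkcond (_ : \big[Rplus/R0]_(w : leafvar I) _ = \big[Rplus/R0]_v \big[Rplus/R0]_l leaf v l);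
  last by rewrite pair_bigA; apply: eq_bigr => -[v l].
rewrite /wdiffL big_distrl big_mkcond /=; apply: sumR_le => v _.
have leaf0 l : Rle 0 (leaf v l).
  by rewrite /leaf; case: ifP => _; [exact: (pent_weight_ge0 _ w0) | apply: Rle_refl].
case: ifP => hv; last exact: sumR_ge0.
case: (decode_neq_leaf hv) => l hl.
by apply: Rle_trans (sumR_ge_term (j := l) _ isT); [rewrite /leaf hl; apply: Rle_refl | ].
Qed.

Lemma wdiffP_moved_ge I (aX bX : leafvar I -> Bt) (bY : Ct -> Ct) c :
  (forall v : LV I, Rle 0 (Lw v)) -> bY c != c ->
  Rle (Rinv (2 * INR #|Ct|)) (wdiffP (I:=pent_inst I) aX bX (fun c => c) bY).
Proof.
move=> w0 hc; apply: (sumR_ge_term (j := inr c)) => [v _|]; first exact: pent_weight_ge0.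
by rewrite /differP eq_sym.
Qed.

Definition reduction_const := Rinv (2 * INR (ntup + #|Ct|)).

(* A close satisfying assignment either moves some element of C_P, or fixes
   them all and then decodes to a satisfying assignment of the lattice instance. *)
Lemma pent_inst_sound I (f : LV I -> LP) eps :
  (forall v : LV I, Rle 0 (Lw v)) -> Rle 0 eps -> Rle eps 1 -> farL f eps ->
  farP al (I:=pent_inst I) (fun w => code (f w.1) w.2) (fun c => c) (Rmult reduction_const eps).
Proof.
move=> w0 eps0 eps1 far bX bY hs.
have hN := ntup_gt0; have hC := INR_card_Ct_gt0 I.
have hNC : Rle (INR ntup) (INR (ntup + #|Ct|)) /\ Rle (INR #|Ct|) (INR (ntup + #|Ct|)).
  by rewrite plus_INR; lra.
have c0 : Rle 0 reduction_const by apply/Rlt_le/Rinv_0_lt_compat; lra.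
case: (pickP (fun c => bY c != c)) => [c hc | fixed].
- apply: Rle_trans _ (wdiffP_moved_ge (fun w => code (f w.1) w.2) bX w0 hc).
  apply: Rle_trans (_ : Rle _ reduction_const) _.
    by rewrite -[X in Rle _ X]Rmult_1_r; apply: Rmult_le_compat_l.
  by apply: Rinv_le_contravar; lra.
- have bYE : bY =1 id by move=> c; apply/eqP/negbFE/fixed.
  apply: Rle_trans _ (wdiffL_decode_le f bX bY w0).
  rewrite Rmult_comm; apply: Rmult_le_compat; [lra | exact: c0 | exact: far (decode_sat bYE hs) |].
  by apply: Rinv_le_contravar; lra.
Qed.

Lemma pent_inst_valid (I : LInst al be ga) :
  (forall v : LV I, Rle 0 (Lw v) /\ Rle (Lw v) 1) -> \big[Rplus/R0]_(v : LV I) Lw v = R1 ->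
  valid_PInst (pent_inst I).
Proof.
move=> w01 wsum; have hN := ntup_gt0; have hC := INR_card_Ct_gt0 I.
have one_le n : Rlt 0 (INR n) -> Rle 1 (INR n).
  by case: n => [|n] h; [move: h => /= | rewrite S_INR; have := pos_INR n]; lra.
split.
- case=> [w|c] /=; first by case: (w01 w.1) => *; apply: Rdiv_in01 => //; have := one_le _ hN; lra.
  have := @Rdiv_in01 1 (2 * INR #|Ct|); rewrite /Rdiv Rmult_1_l; apply; try lra.
  by have := one_le _ hC; lra.
- rewrite big_sumType sumR_const -(pair_bigA _ (fun v (_ : Tup) => Rdiv (Lw v) (2 * INR ntup))).
  under eq_bigr do rewrite sumR_const -/ntup.
  rewrite (eq_bigr (fun v => Rmult (Lw v) (/ 2))); last by move=> v _; field; lra.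
  rewrite -big_distrl wsum.
  change (Rplus (Rmult R1 (/ 2)) (Rmult (INR #|Ct|) (/ (2 * INR #|Ct|))) = R1).
  by field; lra.
Qed.

Lemma pent_inst_card (I : LInst al be ga) : (0 < #|LV I|)%N ->
  Rle (INR (#|PX (pent_inst I)| + #|PY (pent_inst I)|)) (Rmult (INR (ntup + #|Ct|)) (INR #|LV I|)).
Proof.
move=> V0; rewrite -mult_INR; apply/le_INR/leP.
change (#|leafvar I| + #|Ct| <= (ntup + #|Ct|) * #|LV I|)%N.
by rewrite card_prod -/ntup mulnDl [(ntup * _)%N]mulnC leq_add2l leq_pmulr.
Qed.

Definition reduction : Reduction al be ga :=
  @Build_Reduction P al be ga (fun _ => unit) (fun I _ => pent_inst I)
    (fun I _ f w => code (f w.1) w.2) (fun I _ f c => c).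

Lemma reduction_linear (D : R) : linear_reduction D reduction.
Proof.
exists (INR (ntup + #|Ct|)), reduction_const, 1%N.
have hN := ntup_gt0.
split; first by apply: Rinv_0_lt_compat; rewrite plus_INR; have := pos_INR #|Ct|; lra.
move=> I [w01 wsum _].
have w0 (v : LV I) : Rle 0 (Lw v) by case: (w01 v).
have V0 : (0 < #|LV I|)%N.
  by rewrite lt0n; apply/negP => /eqP V0; move: wsum; rewrite sumR_card0 //; lra.
split=> [|s|s f|eps f eps0 eps1 far|s].
- by rewrite card_unit.
- by split; [exact: pent_inst_valid | exact: pent_inst_card].
- exact: pent_inst_complete.
- exists setT; split; first by rewrite cardsT card_unit /=; lra.
  by move=> s _; apply: pent_inst_sound => //; lra.
- split=> [x|y]; last by exists set0; rewrite cards0.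
  exists [set x.1]; rewrite cards1; split=> // f g fg.
  by rewrite /= fg // inE.
Qed.

End Reduction.

Theorem mainTheorem15 (P : finType) (al be ga : rel P) :
  is_pentagon al be ga ->
  forall D : R, Rle R1 D ->
  exists F : Reduction al be ga, linear_reduction D F.
Proof.
move=> pentagon D _.
have [d code_ex] := univ_eval_onto pentagon.
have code_spec (th : LP al be ga) : exists x : {ffun d.-tuple 'I_4 -> Bt be},
    univ_eval al ga (fun t => x t) == val th.
  by have [x e] := code_ex th; exists x; apply/eqP.
exists (reduction (fun th => xchoose (code_spec th))).
by apply: reduction_linear => // th; apply/eqP/(xchooseP (code_spec th)).
Qed.
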